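(* Assume Assumption 1 (randomization), $0<P(Z=1\mid R=r)<1$, monotonicity ($S(1)\ge S(0)$ almost surely), and $P_{01r}>0$. Then $$\max\Big\{0,\frac{Q_{11r}P_{11r}-P_{11r}+P_{01r}}{P_{01r}}\Big\}-Q_{01r}\ \le\ ACE_{ss,r}\ \le\ \min\Big\{1,\frac{Q_{11r}P_{11r}}{P_{01r}}\Big\}-Q_{01r}.$$
   Context: A unit has trial $R$, treatment $Z\in\{0,1\}$, binary potential surrogate and endpoint $S(z),Y(z)$; observed $S=ZS(1)+(1-Z)S(0)$, $Y=ZY(1)+(1-Z)Y(0)$. $U=(S(1),S(0))$ with $ss=(1,1)$, $s\bar{s}=(1,0)$, $\bar{s}s=(0,1)$, $\bar{s}\bar{s}=(0,0)$; $ACE_{ur}=E\{Y(1)-Y(0)\mid U=u,R=r\}$. $P_{zsr}=P(S=s\mid Z=z,R=r)$, $Q_{zsr}=P(Y=1\mid Z=z,S=s,R=r)$. Assumption 1 (randomization): $Z\perp\!\!\!\perp\{S(1),S(0),Y(1),Y(0)\}\mid R$. Under these assumptions $P(U=ss\mid R=r)=P_{01r}$. *)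

From HB Require Import structures.
From mathcomp Require Import all_boot all_order all_algebra.
Set Implicit Arguments. Unset Strict Implicit. Unset Printing Implicit Defensive.
Import Order.TTheory GRing.Theory Num.Theory.
Local Open Scope ring_scope.

Definition Pr (F : realFieldType) (Om : finType) (p : Om -> F) (A : pred Om) : F :=
  \sum_(w | A w) p w.

Definition cPr (F : realFieldType) (Om : finType) (p : Om -> F) (A B : pred Om) : F :=
  Pr p (predI A B) / Pr p B.

Definition cE (F : realFieldType) (Om : finType) (p : Om -> F) (X : Om -> F) (B : pred Om) : F :=
  (\sum_(w | B w) p w * X w) / Pr p B.

Definition is_pmf (F : realFieldType) (Om : finType) (p : Om -> F) : Prop :=
  (forall w, 0 <= p w) /\ \sum_w p w = 1.

Definition cond_indep (F : realFieldType) (Om : finType) (p : Om -> F)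
  (T : eqType) (Rv : Om -> T) (Z : Om -> bool) (V : eqType) (X : Om -> V) : Prop :=
  forall (r : T) (z : bool) (v : V),
    Pr p (fun w => [&& Rv w == r, Z w == z & X w == v]) * Pr p (fun w => Rv w == r)
    = Pr p (fun w => (Rv w == r) && (Z w == z)) * Pr p (fun w => (Rv w == r) && (X w == v)).

Definition obs (Om : Type) (Z X1 X0 : Om -> bool) (w : Om) : bool :=
  if Z w then X1 w else X0 w.

Definition Pzsr (F : realFieldType) (Om : finType) (p : Om -> F) (T : eqType)
  (Rv : Om -> T) (Z S1 S0 : Om -> bool) (z s : bool) (r : T) : F :=
  cPr p (fun w => obs Z S1 S0 w == s) (fun w => (Z w == z) && (Rv w == r)).

Definition Qzsr (F : realFieldType) (Om : finType) (p : Om -> F) (T : eqType)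
  (Rv : Om -> T) (Z S1 S0 Y1 Y0 : Om -> bool) (z s : bool) (r : T) : F :=
  cPr p (fun w => obs Z Y1 Y0 w)
        (fun w => [&& Z w == z, obs Z S1 S0 w == s & Rv w == r]).

Definition ACE (F : realFieldType) (Om : finType) (p : Om -> F) (T : eqType)
  (Rv : Om -> T) (S1 S0 Y1 Y0 : Om -> bool) (u : bool * bool) (r : T) : F :=
  cE p (fun w => (Y1 w)%:R - (Y0 w)%:R)
       (fun w => ((S1 w, S0 w) == u) && (Rv w == r)).

From HB Require Import structures.
From mathcomp Require Import all_boot all_order all_algebra.
From mathcomp Require Import ring lra.
Set Implicit Arguments. Unset Strict Implicit. Unset Printing Implicit Defensive.
Import Order.TTheory GRing.Theory Num.Theory.
Local Open Scope ring_scope.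

(* Randomization makes every event about the potential outcomes independent of
   Z given R = r, so conditioning on Z = z, R = r can be replaced by conditioning
   on R = r alone once the observed variables are replaced by their z-potential
   versions: P_{11r}, P_{01r} become P(S(1)), P(S(0)) and Q_{11r}, Q_{01r}
   become P(Y(1) | S(1)), P(Y(0) | S(0)), all given R = r.  Monotonicity makes
   the principal stratum ss equal to {S(0) = 1} almost surely, so
   ACE_{ss,r} = P(Y(1) | S(0)) - P(Y(0) | S(0)).  The only unidentified quantity
   is P(Y(1), S(0)), which lies between max(0, P(Y(1), S(1)) - P(S(1), not S(0)))
   and min(P(S(0)), P(Y(1), S(1))); these are the stated bounds. *)

Section FiniteProbability.
Variables (F : realFieldType) (Om : finType) (p : Om -> F).

Lemma eq_Pr (A A' : pred Om) : A =1 A' -> Pr p A = Pr p A'.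
Proof. exact: eq_bigl. Qed.

Lemma cPr_neq0_meet (A B : pred Om) : cPr p A B != 0 -> Pr p (predI A B) != 0.
Proof. by apply: contra_neq; rewrite /cPr => ->; rewrite mul0r. Qed.

Lemma cPr_neq0_cond (A B : pred Om) : cPr p A B != 0 -> Pr p B != 0.
Proof. by apply: contra_neq; rewrite /cPr => ->; rewrite invr0 mulr0. Qed.

Lemma cPr_chain (A B C D : pred Om) :
  D =1 predI B C -> Pr p C != 0 -> cPr p A D = cPr p (predI A B) C / cPr p B C.
Proof.
move=> eqD PC_neq0; rewrite /cPr (eq_Pr eqD).
rewrite (@eq_Pr (predI A D) (predI (predI A B) C)); last by move=> w /=; rewrite eqD andbA.
by rewrite invf_div mulrA divfK.
Qed.

Lemma cEB (f g : Om -> F) (B : pred Om) :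
  cE p (fun w => f w - g w) B = cE p f B - cE p g B.
Proof. by rewrite /cE -mulrBl -sumrB; under eq_bigr do rewrite mulrBr. Qed.

Lemma cE_indicator (A B : pred Om) : cE p (fun w => (A w)%:R) B = cPr p A B.
Proof.
rewrite /cE /cPr /Pr [in RHS](@eq_bigl _ _ _ _ _ _ (fun w => B w && A w)); last first.
  by move=> w /=; rewrite andbC.
by rewrite big_mkcondr; congr (_ / _); apply: eq_bigr => w _; case: (A w); rewrite ?mulr1 ?mulr0.
Qed.

Hypothesis p_ge0 : forall w, 0 <= p w.

Lemma Pr_ge0 (A : pred Om) : 0 <= Pr p A.
Proof. exact: sumr_ge0. Qed.

Lemma le_Pr_as (A A' : pred Om) :
  (forall w, 0 < p w -> A w -> A' w) -> Pr p A <= Pr p A'.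
Proof.
move=> subA; rewrite /Pr big_mkcond [leRHS]big_mkcond; apply: ler_sum => w _.
have [->|pw_neq0] := eqVneq (p w) 0; first by rewrite !if_same.
have pw_gt0 : 0 < p w by rewrite lt0r pw_neq0 p_ge0.
case Aw: (A w); first by rewrite (subA w).
by case: (A' w).
Qed.

Lemma eq_Pr_as (A A' : pred Om) :
  (forall w, 0 < p w -> A w = A' w) -> Pr p A = Pr p A'.
Proof. by move=> eqA; apply/le_anti; rewrite !le_Pr_as // => w /eqA ->. Qed.

Lemma cPr_ge0 (A B : pred Om) : 0 <= cPr p A B.
Proof. by rewrite divr_ge0 ?Pr_ge0. Qed.

Lemma le_cPr (A A' B : pred Om) :
  (forall w, 0 < p w -> B w -> A w -> A' w) -> cPr p A B <= cPr p A' B.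
Proof.
move=> subA; rewrite ler_wpM2r ?invr_ge0 ?Pr_ge0 //.
by apply: le_Pr_as => w /subA sub /andP[Aw Bw]; rewrite /= sub.
Qed.

Lemma eq_cPr (A A' B : pred Om) :
  (forall w, 0 < p w -> B w -> A w = A' w) -> cPr p A B = cPr p A' B.
Proof.
by move=> eqA; apply/le_anti; rewrite !le_cPr // => w /eqA eqAw /eqAw ->.
Qed.

Lemma cPrD (A A' B : pred Om) :
  (forall w, 0 < p w -> B w -> A w -> A' w) ->
  cPr p A' B - cPr p A B = cPr p (fun w => A' w && ~~ A w) B.
Proof.
move=> subA; rewrite /cPr -mulrBl; congr (_ / _); apply/eqP.
rewrite subr_eq addrC /Pr (bigID A) /=; apply/eqP; congr (_ + _).
  apply: (eq_Pr_as (A := fun w => (A' w && B w) && A w)) => w pw_gt0 /=.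
  case Aw: (A w); last by rewrite andbF.
  by case Bw: (B w); rewrite ?andbF // (subA w).
by apply: eq_bigl => w /=; rewrite andbAC.
Qed.

Section Randomization.
Variables (T : eqType) (Rv : Om -> T) (Z : Om -> bool) (V : finType) (X : Om -> V).
Hypothesis randomized : cond_indep p Rv Z X.

Lemma Pr_randomized (f : pred V) (r : T) (z : bool) :
  Pr p (fun w => [&& Rv w == r, Z w == z & f (X w)]) * Pr p (fun w => Rv w == r)
  = Pr p (fun w => (Rv w == r) && (Z w == z)) * Pr p (fun w => (Rv w == r) && f (X w)).
Proof.
rewrite /Pr (partition_big X f) /=; last by move=> w /and3P[].
rewrite [s in _ = _ * s](partition_big X f) /=; last by move=> w /andP[].
rewrite mulr_suml mulr_sumr; apply: eq_bigr => v fv.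
have X_eq_v (b : bool) w : b && f (X w) && (X w == v) = b && (X w == v).
  by case: (X w =P v) => [->|]; rewrite ?fv ?andbT ?andbF.
rewrite (eq_bigl (fun w => [&& Rv w == r, Z w == z & X w == v])); last first.
  by move=> w; rewrite andbA X_eq_v -andbA.
have := randomized r z v; rewrite /Pr => ->; congr (_ * _).
by apply: eq_bigl => w; rewrite X_eq_v.
Qed.

Lemma cPr_randomized (A : pred Om) (f : pred V) (z : bool) (r : T) :
  Pr p (fun w => (Z w == z) && (Rv w == r)) != 0 ->
  (forall w, Z w = z -> A w = f (X w)) ->
  cPr p A (fun w => (Z w == z) && (Rv w == r))
  = cPr p (fun w => f (X w)) (fun w => Rv w == r).
Proof.
move=> PZR_neq0 eqA.
have PR_gt0 : 0 < Pr p (fun w => Rv w == r).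
  apply: lt_le_trans (le_Pr_as (A := fun w => (Z w == z) && (Rv w == r)) _).
    by rewrite lt0r PZR_neq0 Pr_ge0.
  by move=> w _ /andP[].
have PR_neq0 := lt0r_neq0 PR_gt0.
have eqZR : Pr p (fun w => (Z w == z) && (Rv w == r))
            = Pr p (fun w => (Rv w == r) && (Z w == z)).
  by apply: eq_Pr => w; rewrite andbC.
rewrite /cPr eqZR (@eq_Pr _ (fun w => [&& Rv w == r, Z w == z & f (X w)])); last first.
  by move=> w /=; case: eqP => [/eqA ->|]; rewrite ?andbF // andbC andbA.
rewrite -[Pr p (fun w => [&& _, _ & _])](mulfK PR_neq0) Pr_randomized.
rewrite (@eq_Pr (predI _ _) (fun w => (Rv w == r) && f (X w))); last first.
  by move=> w /=; rewrite andbC.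
rewrite eqZR in PZR_neq0; field; exact/andP.
Qed.

End Randomization.
End FiniteProbability.

Lemma principal_stratum_bounds (F : realFieldType) (a s1 y1 y1a y0a : F) :
  0 < a -> 0 <= y1a -> y1a <= a -> y1a <= y1 -> y1 - y1a <= s1 - a ->
  Num.max 0 ((y1 - s1 + a) / a) - y0a / a <= y1a / a - y0a / a /\
  y1a / a - y0a / a <= Num.min 1 (y1 / a) - y0a / a.
Proof.
move=> a_gt0 y1a_ge0 y1a_le_a y1a_le_y1 diff_le.
have inva_ge0 : 0 <= a^-1 by rewrite invr_ge0 ltW.
split; rewrite lerD2r.
  rewrite ge_max mulr_ge0 //=.
  by apply: ler_wpM2r => //; lra.
by rewrite le_min ler_pdivrMr // mul1r y1a_le_a /=; apply: ler_wpM2r.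
Qed.

Section PrincipalStratum.
Variables (F : realFieldType) (Om : finType) (p : Om -> F) (T : eqType) (Rv : Om -> T).
Variables (Z S1 S0 Y1 Y0 : Om -> bool) (r : T).
Hypothesis p_ge0 : forall w, 0 <= p w.

Let pR (A : pred Om) := cPr p A (fun w => Rv w == r).

Section Identification.
Hypothesis randomization : cond_indep p Rv Z (fun w => (S1 w, S0 w, Y1 w, Y0 w)).
Variable z : bool.
Hypothesis arm_neq0 : Pr p (fun w => (Z w == z) && (Rv w == r)) != 0.

Lemma Pzsr_randomized : Pzsr p Rv Z S1 S0 z true r = pR (fun w => if z then S1 w else S0 w).
Proof.
apply: (cPr_randomized p_ge0 randomization (f := fun v => if z then v.1.1.1 else v.1.1.2))
  => // w Zw.
by rewrite /obs Zw eqb_id; case: z Zw.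
Qed.

Lemma Qzsr_randomized :
  Qzsr p Rv Z S1 S0 Y1 Y0 z true r
  = pR (fun w => (if z then Y1 w else Y0 w) && (if z then S1 w else S0 w))
    / pR (fun w => if z then S1 w else S0 w).
Proof.
rewrite /Qzsr (cPr_chain _ (B := fun w => obs Z S1 S0 w == true)
                           (C := fun w => (Z w == z) && (Rv w == r))) //; last first.
  by move=> w /=; rewrite andbCA.
congr (_ / _); last exact: Pzsr_randomized.
apply: (cPr_randomized p_ge0 randomization
  (f := fun v => (if z then v.1.2 else v.2) && (if z then v.1.1.1 else v.1.1.2))) => // w Zw.
by rewrite /= /obs Zw eqb_id; case: z Zw.
Qed.

End Identification.

Hypothesis monotone : forall w, 0 < p w -> (S0 w ==> S1 w).

Let S0_S1 w : 0 < p w -> S0 w -> S1 w.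
Proof. by move/monotone/implyP. Qed.

Lemma le_potential_surrogate : pR S0 <= pR S1.
Proof. by apply: le_cPr => // w /S0_S1 S01 _. Qed.

Hypothesis trial_neq0 : Pr p (fun w => Rv w == r) != 0.

Lemma ACE_ss_monotone :
  ACE p Rv S1 S0 Y1 Y0 (true, true) r
  = pR (fun w => Y1 w && S0 w) / pR S0 - pR (fun w => Y0 w && S0 w) / pR S0.
Proof.
have in_stratum (A : pred Om) :
    cPr p A (fun w => ((S1 w, S0 w) == (true, true)) && (Rv w == r))
    = pR (fun w => A w && S0 w) / pR S0.
  rewrite (cPr_chain _ (B := fun w => S1 w && S0 w) (C := fun w => Rv w == r)) //; last first.
    by move=> w; rewrite /= xpair_eqE !eqb_id.
  by congr (_ / _); apply: eq_cPr => // w /S0_S1 S01 _;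
    rewrite /=; case: (S0 w) S01 => [/(_ isT) ->|]; rewrite ?andbT ?andbF.
by rewrite /ACE cEB !cE_indicator !in_stratum.
Qed.

Lemma ACE_ss_bounds : 0 < pR S0 ->
  Num.max 0 ((pR (fun w => Y1 w && S1 w) - pR S1 + pR S0) / pR S0)
    - pR (fun w => Y0 w && S0 w) / pR S0 <= ACE p Rv S1 S0 Y1 Y0 (true, true) r /\
  ACE p Rv S1 S0 Y1 Y0 (true, true) r
    <= Num.min 1 (pR (fun w => Y1 w && S1 w) / pR S0) - pR (fun w => Y0 w && S0 w) / pR S0.
Proof.
move=> a_gt0; rewrite ACE_ss_monotone; apply: principal_stratum_bounds => //.
- exact: cPr_ge0.
- by apply: le_cPr => // w _ _ /andP[].
- by apply: le_cPr => // w /S0_S1 S01 _ /andP[-> /S01].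
rewrite !cPrD //; first by apply: le_cPr => // w _ _; case: (Y1 w) (S1 w) (S0 w) => [] [] [].
- by move=> w /S0_S1.
- by move=> w /S0_S1 S01 _ /andP[-> /S01].
Qed.

End PrincipalStratum.

Theorem propositionA2 (F : realFieldType) (Om : finType) (p : Om -> F)
  (T : eqType) (Rv : Om -> T) (Z S1 S0 Y1 Y0 : Om -> bool) (r : T)
  (pmf : is_pmf p)
  (randomization : cond_indep p Rv Z (fun w => (S1 w, S0 w, Y1 w, Y0 w)))
  (hZ0 : 0 < cPr p (fun w => Z w) (fun w => Rv w == r))
  (hZ1 : cPr p (fun w => Z w) (fun w => Rv w == r) < 1)
  (monotone : forall w, 0 < p w -> (S0 w ==> S1 w))
  (hP01 : 0 < Pzsr p Rv Z S1 S0 false true r) :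
  let P11 := Pzsr p Rv Z S1 S0 true true r in
  let P01 := Pzsr p Rv Z S1 S0 false true r in
  let Q11 := Qzsr p Rv Z S1 S0 Y1 Y0 true true r in
  let Q01 := Qzsr p Rv Z S1 S0 Y1 Y0 false true r in
  let ace := ACE p Rv S1 S0 Y1 Y0 (true, true) r in
  Num.max 0 ((Q11 * P11 - P11 + P01) / P01) - Q01 <= ace /\
  ace <= Num.min 1 (Q11 * P11 / P01) - Q01.
Proof.
move=> P11 P01 Q11 Q01 ace.
have p_ge0 : forall w, 0 <= p w := pmf.1.
have trial_neq0 : Pr p (fun w => Rv w == r) != 0 := cPr_neq0_cond (lt0r_neq0 hZ0).
have treated_neq0 : Pr p (fun w => (Z w == true) && (Rv w == r)) != 0.
  rewrite (eq_Pr p (A' := predI (fun w => Z w) (fun w => Rv w == r))) => [|w].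
    exact: cPr_neq0_meet (lt0r_neq0 hZ0).
  by rewrite /= eqb_id.
have control_neq0 : Pr p (fun w => (Z w == false) && (Rv w == r)) != 0.
  exact: cPr_neq0_cond (lt0r_neq0 hP01).
move: hP01; rewrite /P11 /P01 /Q11 /Q01 /ace.
rewrite !(Qzsr_randomized p_ge0 randomization) //.
rewrite !(Pzsr_randomized p_ge0 randomization) //= => a_gt0.
have s1_gt0 := lt_le_trans a_gt0 (le_potential_surrogate Rv r p_ge0 monotone).
by rewrite divfK ?lt0r_neq0 //; apply: ACE_ss_bounds.
Qed.
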